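(* Let $p>5$ be a prime, $q=p^h$, and let $\mathcal{F}$ be the projective closure of $ax^n+by^m=1$ over $\mathbb{F}_q$, with $a,b\in\mathbb{F}_q^*$ and $m,n$ positive integers with $n\ge m>2$. If $p\mid(n-1)$ and $p\mid(m-2)$, then $\mathcal{F}$ is $\mathbb{F}_q$-Frobenius classical with respect to conics.
   Context: With $\varphi_0,\dots,\varphi_5$ the monomials of degree 2 in $x,y,1$, $\tau$ separating and $D^{(k)}_\tau$ Hasse derivatives, the $\mathbb{F}_q$-Frobenius order sequence w.r.t. conics is the lexicographically smallest $\nu_0<\dots<\nu_4$ such that the $6\times6$ determinant with first row $(\varphi_j^q)_j$ and rows $(D^{(\nu_i)}_\tau\varphi_j)_j$ is nonzero; the curve is $\mathbb{F}_q$-Frobenius classical w.r.t. conics if $\nu_i=i$ for all $i$. *)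

From HB Require Import structures.
From mathcomp Require Import all_boot all_order all_algebra all_field.
Set Implicit Arguments. Unset Strict Implicit. Unset Printing Implicit Defensive.
Import Order.TTheory GRing.Theory.
Local Open Scope ring_scope.

Definition conic_mon (R : comNzRingType) (j : nat) (u v : R) : R :=
  match j with
  | 0 => u ^+ 2 | 1 => u * v | 2 => v ^+ 2 | 3 => u | 4 => v | _ => 1
  end.

(* Hasse derivatives w.r.t. the separating variable tau = x are encoded by the
   Taylor expansion  f(x + t, Y(t)) = sum_k D^(k)_x f * t^k  in L[[t]], where
   Y(t) = sum_k (D^(k)_x y) t^k.  The coefficient of t^k only depends on the
   coefficients Y 0 .. Y k, so we compute it with the truncation of Y. *)
Definition hasse_mon (L : fieldType) (x : L) (Y : nat -> L) (j k : nat) : L :=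
  (conic_mon j ('X + x%:P) (\poly_(i < k.+1) Y i))`_k.

(* Y is the Taylor expansion of y along x for the curve a x^n + b y^m = 1,
   i.e. Y k = D^(k)_x y: Y 0 = y and a (x+t)^n + b Y(t)^m = 1 in L[[t]]. *)
Definition hasse_expansion (L : fieldType) (A B : L) (n m : nat)
    (x y : L) (Y : nat -> L) : Prop :=
  Y 0 = y /\
  forall k : nat,
    (A%:P * ('X + x%:P) ^+ n + B%:P * (\poly_(i < k.+1) Y i) ^+ m)`_k
      = (k == 0)%:R.

Definition frob_conic_mx (L : fieldType) (q : nat) (x y : L) (Y : nat -> L)
    (nu : seq nat) : 'M[L]_6 :=
  \matrix_(i < 6, j < 6)
    (if (i : nat) == 0 then (conic_mon j x y) ^+ q
     else hasse_mon x Y j (nth 0 nu i.-1)).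

Definition lex_lt5 (s t : seq nat) : Prop :=
  exists2 i : nat, (i < 5)%N &
    (forall j : nat, (j < i)%N -> nth 0 s j = nth 0 t j) /\
    (nth 0 s i < nth 0 t i)%N.

Definition is_frob_conic_order_seq (L : fieldType) (q : nat) (x y : L)
    (Y : nat -> L) (nu : seq nat) : Prop :=
  [/\ size nu = 5%N, sorted ltn nu,
      \det (frob_conic_mx q x y Y nu) != 0 &
      forall nu' : seq nat, size nu' = 5%N -> sorted ltn nu' -> lex_lt5 nu' nu ->
        \det (frob_conic_mx q x y Y nu') = 0].

Definition frob_classical_conics (L : fieldType) (q : nat) (x y : L)
    (Y : nat -> L) : Prop :=
  is_frob_conic_order_seq q x y Y [:: 0%N; 1%N; 2%N; 3%N; 4%N].

(* Hasse derivatives of order 0 < k < p kill p-th powers, so when p divides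
   n - 1 and m - 2 the curve equation gives, to order 4 < p,
   al D^k x + be D^k (y^2) = D^k 1 with al = a x^(n-1), be = b y^(m-2):
   the conic al u + be v^2 = 1 osculates the curve at its generic point.
   The column combination al phi_3 + be phi_2 - phi_5 therefore vanishes on
   the five derivative rows and equals al x^q + be y^(2q) - 1 on the
   Frobenius row.  That value is nonzero, since eliminating y from it and the
   curve equation would make x algebraic (the degrees differ because m < 2n).
   So the determinant vanishes only if the 5 x 6 matrix of Hasse derivatives
   has dependent rows; a triangular elimination reduces this to
   D^2y D^4y = (D^3y)^2, which is impossible as
   16 y^4 (D^2y D^4y - (D^3y)^2) = (D^1y)^6 and D^1y <> 0. *)

From HB Require Import structures.
From mathcomp Require Import all_boot all_order all_algebra all_field.
From mathcomp Require Import ring zify.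
Import GRing.Theory.
Set Implicit Arguments. Unset Strict Implicit. Unset Printing Implicit Defensive.
Local Open Scope ring_scope.

Section TruncatedFrobenius.
Variables (R : comNzRingType) (p : nat).
Hypothesis pcharRp : p \in [pchar R].

Lemma exp_pchar_mod_Xn (P : {poly R}) s :
  exists D, P ^+ (p * s) = (P`_0 ^+ (p * s))%:P + D * 'X^p.
Proof.
rewrite exprM; have [D ->] : exists D, P ^+ p = (P`_0 ^+ p)%:P + D * 'X^p.
  exists (drop_poly 1 P ^+ p).
  have P0E : take_poly 1 P = (P`_0)%:P.
    by apply/polyP => -[|i]; rewrite coef_take_poly coefC.
  have pcharPp : p \in [pchar {poly R}] by rewrite pchar_poly.
  rewrite -{1}(poly_take_drop 1 P) exprDn_pchar; last first.
    by rewrite pnatE ?(pcharf_prime pcharPp).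
  by rewrite P0E exprMn -exprM mul1n rmorphXn.
elim: s => [|s [E IH]]; first by exists 0; rewrite muln0 !expr0 mul0r addr0.
exists (E * (P`_0 ^+ p)%:P + (P`_0 ^+ (p * s))%:P * D + E * D * 'X^p).
by rewrite exprSr IH mulnSr exprD polyCM; ring.
Qed.

Lemma coef_exp_pchar_mul (P Q : {poly R}) s k : (k < p)%N ->
  (P ^+ (p * s) * Q)`_k = P`_0 ^+ (p * s) * Q`_k.
Proof.
move=> ltkp; have [D ->] := exp_pchar_mod_Xn P s.
by rewrite mulrDl coefD coefCM mulrAC coefMXn ltkp addr0.
Qed.

End TruncatedFrobenius.

Lemma hasse_expansion_osculating (L : fieldType) p (A B x y : L) n m Y k :
  p \in [pchar L] -> (p %| n - 1)%N -> (p %| m - 2)%N -> (0 < n)%N -> (1 < m)%N ->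
  hasse_expansion A B n m x y Y -> (k < p)%N ->
  A * x ^+ (n - 1) * hasse_mon x Y 3 k + B * y ^+ (m - 2) * hasse_mon x Y 2 k
    = hasse_mon x Y 5 k.
Proof.
move=> pcharLp /dvdnP[s n1E] /dvdnP[r m2E] n_gt0 m_gt1 [Y0E expE] ltkp.
rewrite /hasse_mon /= coef1 -(expE k) [RHS]coefD !coefCM.
set T := \poly_(i < k.+1) Y i.
have -> : ('X + x%:P) ^+ n = ('X + x%:P) ^+ (p * s) * ('X + x%:P).
  by rewrite -exprSr mulnC -n1E subn1 prednK.
have -> : T ^+ m = T ^+ (p * r) * T ^+ 2.
  by rewrite -exprD mulnC -m2E subnK.
rewrite !coef_exp_pchar_mul // mulnC -n1E mulnC -m2E.
have -> : ('X + x%:P)`_0 = x by rewrite coefD coefX coefC add0r.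
by rewrite coef_poly /= Y0E !mulrA.
Qed.

Section HasseTable.
Variables (L : fieldType) (x : L) (Y : nat -> L).

Local Ltac expand_hasse := rewrite /hasse_mon /= ?expr2 ?coefM ?big_ord_recr ?big_ord0 /=
  ?coefD ?coefX ?coefC ?coef_poly ?coef1 /= ?coefD ?coefX ?coefC ?coef_poly /=; ring.

Lemma hasse_mon_xx : [/\ hasse_mon x Y 0 0 = x ^+ 2, hasse_mon x Y 0 1 = 2%:R * x,
  hasse_mon x Y 0 2 = 1, hasse_mon x Y 0 3 = 0 & hasse_mon x Y 0 4 = 0].
Proof. by split; expand_hasse. Qed.

Lemma hasse_mon_xy : [/\ hasse_mon x Y 1 0 = x * Y 0, hasse_mon x Y 1 1 = Y 0 + x * Y 1,
  hasse_mon x Y 1 2 = Y 1 + x * Y 2, hasse_mon x Y 1 3 = Y 2 + x * Y 3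
  & hasse_mon x Y 1 4 = Y 3 + x * Y 4].
Proof. by split; expand_hasse. Qed.

Lemma hasse_mon_yy : [/\ hasse_mon x Y 2 0 = Y 0 ^+ 2,
  hasse_mon x Y 2 1 = 2%:R * Y 0 * Y 1,
  hasse_mon x Y 2 2 = 2%:R * Y 0 * Y 2 + Y 1 ^+ 2,
  hasse_mon x Y 2 3 = 2%:R * Y 0 * Y 3 + 2%:R * Y 1 * Y 2
  & hasse_mon x Y 2 4 = 2%:R * Y 0 * Y 4 + 2%:R * Y 1 * Y 3 + Y 2 ^+ 2].
Proof. by split; expand_hasse. Qed.

Lemma hasse_mon_x : [/\ hasse_mon x Y 3 0 = x, hasse_mon x Y 3 1 = 1,
  hasse_mon x Y 3 2 = 0, hasse_mon x Y 3 3 = 0 & hasse_mon x Y 3 4 = 0].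
Proof. by split; expand_hasse. Qed.

Lemma hasse_mon_y : [/\ hasse_mon x Y 4 0 = Y 0, hasse_mon x Y 4 1 = Y 1,
  hasse_mon x Y 4 2 = Y 2, hasse_mon x Y 4 3 = Y 3 & hasse_mon x Y 4 4 = Y 4].
Proof. by split; expand_hasse. Qed.

Lemma hasse_mon_1 : [/\ hasse_mon x Y 5 0 = 1, hasse_mon x Y 5 1 = 0,
  hasse_mon x Y 5 2 = 0, hasse_mon x Y 5 3 = 0 & hasse_mon x Y 5 4 = 0].
Proof. by split; expand_hasse. Qed.

End HasseTable.

Lemma kernel_det2 (K : fieldType) (a b c d u v : K) : a * d - b * c != 0 ->
  u * a + v * c = 0 -> u * b + v * d = 0 -> u = 0 /\ v = 0.
Proof.
move=> det_neq0 eq1 eq2.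
have uE : u * (a * d - b * c) = d * (u * a + v * c) - c * (u * b + v * d) by ring.
have vE : v * (a * d - b * c) = a * (u * b + v * d) - b * (u * a + v * c) by ring.
rewrite eq1 eq2 !mulr0 subrr in uE vE.
by split; apply: (mulIf det_neq0); rewrite mul0r ?uE ?vE.
Qed.

Definition hasse_conic_mx (L : fieldType) (x : L) (Y : nat -> L) : 'M[L]_(5, 6) :=
  \matrix_(k < 5, j < 6) hasse_mon x Y j k.

Definition conic_comb_col (L : fieldType) (al be : L) : 'cV[L]_6 :=
  al *: delta_mx (inord 3) 0 + be *: delta_mx (inord 2) 0 - delta_mx (inord 5) 0.

Lemma mul_conic_comb_col (L : fieldType) (al be : L) r (A : 'M[L]_(r, 6)) :
  A *m conic_comb_col al be
    = \col_i (al * A i (inord 3) + be * A i (inord 2) - A i (inord 5)).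
Proof.
apply/colP => i.
by rewrite /conic_comb_col !mulmxDr mulmxN -!scalemxAr -!colE !mxE.
Qed.

Lemma frob_conic_mx_classicalE (L : fieldType) q (x y : L) Y :
  frob_conic_mx q x y Y [:: 0; 1; 2; 3; 4]%N
    = col_mx (\row_j conic_mon j x y ^+ q) (hasse_conic_mx x Y).
Proof.
apply/matrixP => i j; rewrite !mxE.
case: splitP => [i0 iE | k iE]; rewrite !mxE iE.
  by rewrite (ord1 i0).
by case: k iE => -[|[|[|[|[|]]]]].
Qed.

Section OsculatingConic.
Variables (L : fieldType) (x y al be : L) (Y : nat -> L).
Hypotheses (Y0E : Y 0 = y) (al_neq0 : al != 0) (be_neq0 : be != 0).
Hypothesis osculating : forall k, (k < 5)%N ->
  al * hasse_mon x Y 3 k + be * hasse_mon x Y 2 k = hasse_mon x Y 5 k.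

Lemma hasse_conic_mx_comb : hasse_conic_mx x Y *m conic_comb_col al be = 0.
Proof.
apply/colP => k; rewrite mul_conic_comb_col !mxE !inordK //.
by rewrite osculating // subrr.
Qed.

Lemma osculating_Y1_neq0 : Y 1 != 0.
Proof.
apply: contra_neq al_neq0 => Y1_0.
have [_ x1 _ _ _] := hasse_mon_x x Y; have [_ yy1 _ _ _] := hasse_mon_yy x Y.
have [_ c1 _ _ _] := hasse_mon_1 x Y.
by have := @osculating 1 isT; rewrite x1 yy1 c1 Y1_0 !mulr0 addr0 mulr1.
Qed.

Lemma osculating_minor_neq0 : Y 3 * Y 3 - Y 2 * Y 4 != 0.
Proof.
have [_ _ x2 x3 x4] := hasse_mon_x x Y; have [_ _ yy2 yy3 yy4] := hasse_mon_yy x Y.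
have [_ _ c2 c3 c4] := hasse_mon_1 x Y.
have yy_eq0 k : (1 < k < 5)%N -> hasse_mon x Y 2 k = 0.
  case/andP=> lt1k ltk5; apply: (mulfI be_neq0); rewrite mulr0.
  have := osculating ltk5.
  by case: k lt1k ltk5 => [|[|[|[|[|]]]]] //= _ _; rewrite ?x2 ?x3 ?x4 ?c2 ?c3 ?c4 mulr0 add0r.
have := yy_eq0 2%N isT; have := yy_eq0 3%N isT; have := yy_eq0 4%N isT.
rewrite yy2 yy3 yy4 Y0E => S4 S3 S2.
apply: contra_neq osculating_Y1_neq0 => minor0.
(* S2, S3, S4 express Y 2, Y 3, Y 4 through y and Y 1 *)
have : Y 1 ^+ 6 = - 16%:R * y ^+ 4 * (Y 3 * Y 3 - Y 2 * Y 4)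
  - 8%:R * y ^+ 3 * Y 2 * (2%:R * y * Y 4 + 2%:R * Y 1 * Y 3 + Y 2 ^+ 2)
  - 8%:R * y ^+ 2 * Y 1 * Y 2 * (2%:R * y * Y 3 + 2%:R * Y 1 * Y 2)
  + 4%:R * y ^+ 2 * (2%:R * y * Y 3 + 2%:R * Y 1 * Y 2) ^+ 2
  + (2%:R * y * Y 2 + Y 1 ^+ 2) ^+ 3
  - 3%:R * (2%:R * y * Y 2 + Y 1 ^+ 2) ^+ 2 * Y 1 ^+ 2
  + 3%:R * (2%:R * y * Y 2 + Y 1 ^+ 2) * Y 1 ^+ 4 by ring.
rewrite minor0 S2 S3 S4 => Y1E.
have /eqP : Y 1 ^+ 6 = 0 by rewrite Y1E; ring.
by rewrite expf_eq0 => /andP[_ /eqP].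
Qed.

Lemma mul_hasse_conic_mx_eq0 (w : 'rV[L]_5) : w *m hasse_conic_mx x Y = 0 -> w = 0.
Proof.
move=> wH0; pose w_ k : L := w 0 (inord k).
have col_eq j : (j < 6)%N -> w_ 0 * hasse_mon x Y j 0 + w_ 1 * hasse_mon x Y j 1
    + w_ 2 * hasse_mon x Y j 2 + w_ 3 * hasse_mon x Y j 3 + w_ 4 * hasse_mon x Y j 4 = 0.
  move=> ltj6; have := congr1 (fun M : 'M_(1, 6) => M 0 (Ordinal ltj6)) wH0.
  rewrite !mxE => <-.
  rewrite (eq_bigr (fun k : 'I_5 => w_ k * hasse_mon x Y j k)); last first.
    by move=> k _; rewrite /w_ inord_val mxE.
  rewrite -(big_mkord xpredT (fun k => w_ k * hasse_mon x Y j k)).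
  by rewrite !big_nat_recl // big_geq // addr0 !addrA.
have w0_0 : w_ 0 = 0.
  move: (col_eq 5%N isT); have [-> -> -> -> ->] := hasse_mon_1 x Y => E.
  by rewrite -[RHS]E; ring.
have w1_0 : w_ 1 = 0.
  move: (col_eq 3%N isT); have [-> -> -> -> ->] := hasse_mon_x x Y => E.
  by rewrite -[RHS]E w0_0; ring.
have w2_0 : w_ 2 = 0.
  move: (col_eq 0%N isT); have [-> -> -> -> ->] := hasse_mon_xx x Y => E.
  by rewrite -[RHS]E w0_0 w1_0; ring.
have colY : w_ 3 * Y 3 + w_ 4 * Y 4 = 0.
  move: (col_eq 4%N isT); have [-> -> -> -> ->] := hasse_mon_y x Y => E.
  by rewrite -[RHS]E w0_0 w1_0 w2_0; ring.
have colXY : w_ 3 * Y 2 + w_ 4 * Y 3 = 0.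
  move: (col_eq 1%N isT); have [-> -> -> -> ->] := hasse_mon_xy x Y => E.
  by rewrite -[RHS](subr0 0) -{1}E -(mulr0 x) -colY w0_0 w1_0 w2_0; ring.
have [w3_0 w4_0] := kernel_det2 osculating_minor_neq0 colY colXY.
apply/rowP => k; rewrite mxE -[k]inord_val.
by case: k => -[|[|[|[|[|]]]]].
Qed.

Lemma det_frob_conic_mx_neq0 q : al * x ^+ q + be * (y ^+ 2) ^+ q != 1 ->
  \det (frob_conic_mx q x y Y [:: 0; 1; 2; 3; 4]%N) != 0.
Proof.
move=> frob_off_conic; apply/det0P => -[v v_neq0].
rewrite frob_conic_mx_classicalE -[v](hsubmxK (v : 'rV_(1 + 5))) (@mul_row_col _ 1 1 5) => vM0.
have frob_comb : (\row_j conic_mon j x y ^+ q) *m conic_comb_col al be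
    = (al * x ^+ q + be * (y ^+ 2) ^+ q - 1)%:M.
  by apply/matrixP => i j; rewrite mul_conic_comb_col !mxE (ord1 i) (ord1 j) !inordK //= mulr1n expr1n.
have := congr1 (mulmx^~ (conic_comb_col al be)) vM0.
rewrite mul0mx mulmxDl -!mulmxA hasse_conic_mx_comb frob_comb mulmx0 addr0.
rewrite mul_mx_scalar => /eqP; rewrite scalemx_eq0 subr_eq0 (negbTE frob_off_conic) /=.
move=> /eqP lsub0; move: vM0; rewrite lsub0 mul0mx add0r => /mul_hasse_conic_mx_eq0 rsub0.
by move/eqP: v_neq0; rewrite -[v](hsubmxK (v : 'rV_(1 + 5))) lsub0 rsub0 row_mx0.
Qed.
End OsculatingConic.

Lemma size_1subZXn_exp (R : idomainType) (a : R) d e : a != 0 -> (0 < d)%N ->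
  size ((1 - a *: 'X^d) ^+ e) = (d * e).+1.
Proof.
move=> a_neq0 d_gt0.
have size_1subZXn : size (1 - a *: 'X^d) = d.+1.
  by rewrite addrC size_addl size_opp size_scale // size_polyXn // size_poly1.
have := size_exp (1 - a *: 'X^d) e; rewrite size_1subZXn /= => <-.
by rewrite prednK // size_poly_gt0 expf_neq0 // -size_poly_gt0 size_1subZXn.
Qed.

Section GenericPoint.
Variables (F : idomainType) (L : fieldType) (iota : {rmorphism F -> L}).
Variables (n m : nat) (a b : F) (x y : L).
Hypothesis transcendental_x : forall P : {poly F}, P != 0 -> (map_poly iota P).[x] != 0.
Hypothesis on_curve : iota a * x ^+ n + iota b * y ^+ m = 1.

Lemma generic_x_neq0 : x != 0.
Proof.
by have := transcendental_x (negbT (polyX_eq0 F)); rewrite map_polyX hornerX.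
Qed.

Lemma generic_y_neq0 : (0 < n)%N -> (0 < m)%N -> y != 0.
Proof.
move=> n_gt0 m_gt0.
have P_neq0 : a *: 'X^n - 1 != 0.
  apply/eqP => /(congr1 (coefp 0)) /=.
  rewrite coefB coefZ coefXn eq_sym eqn0Ngt n_gt0 mulr0 coef1 coef0 sub0r.
  by move/eqP; rewrite oppr_eq0 oner_eq0.
apply: contra_neq (transcendental_x P_neq0) => y0.
rewrite rmorphB /= rmorph1 map_polyZ map_polyXn !hornerE.
by rewrite -on_curve y0 expr0n eqn0Ngt m_gt0 mulr0 addr0 subrr.
Qed.

Lemma frob_notin_osculating_conic q : b != 0 -> a != 0 -> (1 < q)%N ->
  (2 <= m <= n)%N ->
  iota a * x ^+ (n - 1) * x ^+ q + iota b * y ^+ (m - 2) * (y ^+ 2) ^+ q != 1.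
Proof.
move=> b_neq0 a_neq0 q_gt1 /andP[m_ge2 le_mn]; apply/eqP => frob_on_conic.
have curveE : iota b * y ^+ m = 1 - iota a * x ^+ n by rewrite -on_curve; ring.
have frobE : iota b * y ^+ (m + (2 * q - 2)) = 1 - iota a * x ^+ (n + (q - 1)).
  rewrite -frob_on_conic -!exprM -!mulrA -!exprD.
  have -> : (n - 1 + q = n + (q - 1))%N by lia.
  have -> : (m - 2 + 2 * q = m + (2 * q - 2))%N by lia.
  ring.
(* eliminating y between the two relations leaves a polynomial relation on x *)
have x_root : iota b ^+ (2 * q - 2) * (1 - iota a * x ^+ (n + (q - 1))) ^+ m
    = (1 - iota a * x ^+ n) ^+ (m + (2 * q - 2)).
  by rewrite -frobE -curveE !exprMn -!exprM mulrA -exprD (addnC (2 * q - 2)%N) (mulnC m).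
pose P : {poly F} := b ^+ (2 * q - 2) *: (1 - a *: 'X^(n + (q - 1))) ^+ m
                     - (1 - a *: 'X^n) ^+ (m + (2 * q - 2)).
have P_neq0 : P != 0.
  rewrite subr_eq0; apply/eqP => /(congr1 (fun p : {poly F} => size p)).
  have n_gt0 : (0 < n)%N by lia.
  rewrite size_scale ?expf_neq0 // !size_1subZXn_exp ?addn_gt0 ?n_gt0 //.
  by case; nia.
have := transcendental_x P_neq0.
rewrite rmorphB /= linearZ /= !rmorphXn /= !rmorphB /= !rmorph1.
by rewrite !map_polyZ !map_polyXn !hornerE x_root subrr eqxx.
Qed.
End GenericPoint.

Lemma leq_nth_sorted_ltn (s : seq nat) i :
  sorted ltn s -> (i < size s)%N -> (i <= nth 0 s i)%N.
Proof.
move=> s_sorted; elim: i => // i IHi lt_is.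
apply: leq_ltn_trans (IHi (ltnW lt_is)) _.
by apply: (sorted_ltn_nth ltn_trans) => //; rewrite inE ltnW.
Qed.

Lemma not_lex_lt5_iota (nu : seq nat) :
  size nu = 5%N -> sorted ltn nu -> ~ lex_lt5 nu [:: 0; 1; 2; 3; 4]%N.
Proof.
move=> size_nu nu_sorted [i lti5 [_]]; apply/negP; rewrite -leqNgt.
have -> : nth 0 [:: 0; 1; 2; 3; 4] i = i by case: i lti5 => [|[|[|[|[|]]]]].
by apply: leq_nth_sorted_ltn; rewrite ?size_nu.
Qed.

Theorem proposition3p16
  (p h : nat) (F : finFieldType) (L : fieldType) (iota : {rmorphism F -> L})
  (n m : nat) (a b : F) (x y : L) (Y : nat -> L) :
  prime p -> (5 < p)%N -> #|F| = (p ^ h)%N ->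
  a != 0 -> b != 0 -> (2 < m)%N -> (m <= n)%N ->
  (p %| n - 1)%N -> (p %| m - 2)%N ->
  (* x is transcendental over F_q, so F_q(x, y) is the function field *)
  (forall P : {poly F}, P != 0 -> (map_poly iota P).[x] != 0) ->
  iota a * x ^+ n + iota b * y ^+ m = 1 ->
  hasse_expansion (iota a) (iota b) n m x y Y ->
  frob_classical_conics (p ^ h)%N x y Y.
Proof.
move=> p_prime p_gt5 cardF a_neq0 b_neq0 m_gt2 le_mn p_dvd_n1 p_dvd_m2 x_transc on_curve expY.
have pcharLp : p \in [pchar L] := rmorph_pchar iota (card_finPcharP cardF p_prime).
have q_gt1 : (1 < p ^ h)%N by rewrite -cardF card_finNzRing_gt1.
have x_neq0 := generic_x_neq0 x_transc.
have y_neq0 : y != 0 by apply: (generic_y_neq0 x_transc on_curve); lia.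
have osculating k : (k < 5)%N ->
    iota a * x ^+ (n - 1) * hasse_mon x Y 3 k + iota b * y ^+ (m - 2) * hasse_mon x Y 2 k
      = hasse_mon x Y 5 k.
  by move=> ltk5; apply: (hasse_expansion_osculating pcharLp) => //; lia.
split => //; last by move=> nu /not_lex_lt5_iota nu_not_lex /nu_not_lex.
apply: (det_frob_conic_mx_neq0 expY.1 _ _ osculating).
- by rewrite mulf_neq0 ?fmorph_eq0 ?expf_neq0.
- by rewrite mulf_neq0 ?fmorph_eq0 ?expf_neq0.
- by apply: frob_notin_osculating_conic; rewrite ?(ltnW m_gt2).
Qed.
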